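(* Let $\mathcal C\subseteq 2^{[n]}$ be a degree two code. Then a neuron $i\in[n]$ is a $k$-piercing of $\mathcal C$ if and only if $i$ is an elimination neuron with exactly $k$ neighbors in $G(\mathcal C)$.
   Context: A code is a set $\mathcal C\subseteq 2^{[n]}$, $[n]=\{1,\dots,n\}$, elements of $[n]$ being neurons. Standing conventions: $\emptyset\in\mathcal C$; every neuron lies in some codeword; no two distinct neurons lie in exactly the same codewords. $\mathcal C\setminus i$ is obtained by removing $i$ from every codeword. For $\sigma\subseteq\tau$, $[\sigma,\tau]=\{\gamma:\sigma\subseteq\gamma\subseteq\tau\}$, of rank $|\tau\setminus\sigma|$. A neuron $i$ is a $k$-piercing of $\mathcal C$ if there are $\sigma\subseteq\tau\subseteq[n]\setminus\{i\}$ with $[\sigma,\tau]$ of rank $k$, $[\sigma,\tau]\subseteq\mathcal C\setminus i$, and $\mathcal C=(\mathcal C\setminus i)\cup[\sigma\cup\{i\},\tau\cup\{i\}]$. A pseudo-monomial in $\mathbb F_2[x_1,\dots,x_n]$ is $\prod_{i\in\sigma}x_i\prod_{j\in\tau}(1-x_j)$ with $\sigma\cap\tau=\emptyset$, ordered by divisibility. $J_\mathcal C=\langle\rho_\sigma:\sigma\notin\mathcal C\rangle$ with $\rho_\sigma=\prod_{i\in\sigma}x_i\prod_{j\notin\sigma}(1-x_j)$; $\mathrm{CF}(J_\mathcal C)$ is the set of minimal pseudo-monomials in $J_\mathcal C$. $\mathcal C$ is degree two if every element of $\mathrm{CF}(J_\mathcal C)$ has degree two. For degree two $\mathcal C$: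 $G(\mathcal C)$ is the graph on $[n]$ with edge $ij$ whenever $\mathrm{CF}(J_\mathcal C)$ contains no pseudo-monomial whose two variables are $x_i,x_j$; $P(\mathcal C)$ is the partial order on $[n]$ with $i<j$ iff $x_i(1-x_j)\in\mathrm{CF}(J_\mathcal C)$. A neuron $i$ is an elimination neuron if it is a simplicial vertex of $G(\mathcal C)$ (its neighborhood is a clique) and a minimal element of $P(\mathcal C)$. *)

From HB Require Import structures.
From mathcomp Require Import all_boot all_order all_algebra.
From mathcomp Require Import mpoly.
Set Implicit Arguments. Unset Strict Implicit. Unset Printing Implicit Defensive.
Import GRing.Theory.
Local Open Scope ring_scope.

Section Codes.
Variable n : nat.

Definition code := {set {set 'I_n}}.

Definition standing (C : code) : Prop :=
  [/\ set0 \in C,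
      (forall i : 'I_n, exists2 c, c \in C & i \in c) &
      (forall i j : 'I_n, (forall c, c \in C -> (i \in c) = (j \in c)) -> i = j)].

Definition code_del (C : code) (i : 'I_n) : code := [set c :\ i | c in C].

Definition interval (s t : {set 'I_n}) : code := [set g : {set 'I_n} | (s \subset g) && (g \subset t)].

Definition k_piercing (C : code) (k : nat) (i : 'I_n) : Prop :=
  exists s t : {set 'I_n},
    [/\ s \subset t, t \subset ~: [set i], #|t :\: s| = k,
        interval s t \subset code_del C i &
        C = code_del C i :|: interval (i |: s) (i |: t)].

Definition poly2 := {mpoly 'F_2[n]}.

(* pseudo-monomial x_sigma (1-x)_tau (meaningful when sigma, tau disjoint) *)
Definition pm (s t : {set 'I_n}) : poly2 :=
  (\prod_(i in s) 'X_i) * (\prod_(j in t) (1 - 'X_j)).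

Definition is_pm (s t : {set 'I_n}) : bool := [disjoint s & t].

Definition rho (s : {set 'I_n}) : poly2 := pm s (~: s).

Definition inJ (C : code) (p : poly2) : Prop :=
  exists q : {set 'I_n} -> poly2, p = \sum_(s in ~: C) q s * rho s.

Definition pdvd (p q : poly2) : Prop := exists r : poly2, q = r * p.

(* (s,t) gives an element of CF(J_C): a pseudo-monomial in J_C, minimal
   w.r.t. divisibility among pseudo-monomials in J_C *)
Definition inCF (C : code) (s t : {set 'I_n}) : Prop :=
  [/\ is_pm s t, inJ C (pm s t) &
      forall s' t', is_pm s' t' -> inJ C (pm s' t') -> pdvd (pm s' t') (pm s t) ->
        pm s' t' = pm s t].

(* degree of the pseudo-monomial x_s (1-x)_t is |s| + |t| *)
Definition degree_two (C : code) : Prop :=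
  forall s t, inCF C s t -> (#|s| + #|t| = 2)%N.

Definition Gedge (C : code) (i j : 'I_n) : Prop :=
  i <> j /\ ~ (exists s t, inCF C s t /\ s :|: t = [set i; j]).

Definition Plt (C : code) (i j : 'I_n) : Prop := inCF C [set i] [set j].

Definition num_neighbors (C : code) (i : 'I_n) (k : nat) : Prop :=
  exists N : {set 'I_n}, (forall j, j \in N <-> Gedge C i j) /\ #|N| = k.

Definition simplicial (C : code) (i : 'I_n) : Prop :=
  forall j l, Gedge C i j -> Gedge C i l -> j <> l -> Gedge C j l.

Definition P_minimal (C : code) (i : 'I_n) : Prop := forall j, ~ Plt C j i.

Definition elimination_neuron (C : code) (i : 'I_n) : Prop :=
  simplicial C i /\ P_minimal C i.

End Codes.

From Pilot Require Import Defs.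
From mathcomp Require Import all_boot all_order all_algebra.
From mathcomp Require Import mpoly ring zify.
Set Implicit Arguments. Unset Strict Implicit. Unset Printing Implicit Defensive.
Import GRing.Theory.

(** A pseudo-monomial x_s (1 - x)_t lies in J_C exactly when no codeword c satisfies
    s ⊆ c and c ∩ t = ∅.  Hence a code of degree two is determined by pairwise data:
    c is a codeword iff every two neurons of c lie in a common codeword and, for x ∈ c
    and y ∉ c, some codeword contains x but not y.  In these terms ij is an edge of G(C)
    when all four pairwise tests on {i, j} pass, and i < j in P(C) when every codeword
    containing i contains j.
    If C is pierced by i along [s, t], the codewords through i form [s ∪ i, t ∪ i] and C
    is closed under deleting i; hence the neighbours of i are t \ s, they form a clique,
    and nothing lies below i.  Conversely, for an elimination neuron i let s be the set of
    neurons above i in P(C) and t = s ∪ N(i): the pairwise criterion shows that the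
    codewords through i are exactly [s ∪ i, t ∪ i] and that deleting i preserves C. *)

Section PseudoMonomials.
Local Open Scope ring_scope.
Variable n : nat.
Implicit Types (s t u : {set 'I_n}) (C : code n).

(* For disjoint [s] and [t], [meets C s t] fails exactly when x_s (1 - x)_t lies in J_C. *)
Definition meets C s t := [exists c in C, (s \subset c) && [disjoint c & t]].

Lemma meetsS C s t s' t' : s' \subset s -> t' \subset t -> meets C s t -> meets C s' t'.
Proof.
move=> ss' tt' /exists_inP[c cC /andP[sc ct]]; apply/exists_inP; exists c => //.
by rewrite (subset_trans ss' sc) (disjointWr tt' ct).
Qed.

Definition indic u : 'I_n -> 'F_2 := fun j => (j \in u)%:R.

Lemma meval_pm s t u : (pm s t).@[indic u] = ((s \subset u) && [disjoint u & t])%:R.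
Proof.
have prodX : \prod_(j in s) indic u j = (s \subset u)%:R.
  have [sub_su | /subsetPn[j js ju]] := boolP (s \subset u).
    by rewrite big1 // => j /(subsetP sub_su); rewrite /indic => ->.
  by rewrite (bigD1 j) //= /indic (negbTE ju) mul0r.
have prod1X : \prod_(j in t) (1 - indic u j) = [disjoint u & t]%:R.
  have [dis_ut | ] := boolP [disjoint u & t]; last first.
    rewrite -setI_eq0 => /set0Pn[j]; rewrite inE => /andP[ju jt].
    by rewrite (bigD1 j) //= /indic ju subrr mul0r.
  by rewrite big1 // => j jt; rewrite /indic (disjointFl dis_ut jt) subr0.
rewrite /pm rmorphM !rmorph_prod /=.
under eq_bigr do rewrite mevalXU.
under [X in _ * X]eq_bigr do rewrite mevalB meval1 mevalXU.
by rewrite prodX prod1X -natrM mulnb.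
Qed.

Lemma inJ_pm_meets C s t : inJ C (pm s t) -> ~~ meets C s t.
Proof.
move=> [q def_pm]; apply/exists_inP => -[c cC /andP[sc ct]].
(* At the indicator vector of c the left side is 1, and every rho v with v \notin C is 0. *)
have := congr1 (meval (indic c)) def_pm.
rewrite meval_pm sc ct rmorph_sum big1 => [|v]; first exact/eqP/oner_neq0.
rewrite inE => vC /=; rewrite mevalM meval_pm disjoints_subset setCK.
have [/andP[vc cv]|_] := boolP ((v \subset c) && (c \subset v)); last first.
  by rewrite mulr0.
by move: vC; rewrite (_ : v = c) ?cC //; apply/eqP; rewrite eqEsubset vc.
Qed.

Lemma inJD C p q : inJ C p -> inJ C q -> inJ C (p + q).
Proof.
move=> [f ->] [g ->]; exists (fun v => f v + g v).
by rewrite -big_split; apply: eq_bigr => v _; rewrite mulrDl.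
Qed.

Lemma inJ_rho C s : s \notin C -> inJ C (rho s).
Proof.
move=> sNC; exists (fun v => (v == s)%:R).
rewrite (bigD1 s) ?inE //= eqxx mul1r big1 ?addr0 // => v /andP[_ /negbTE->].
by rewrite mul0r.
Qed.

Lemma pm_splitU1 s t j : j \notin s -> j \notin t ->
  pm s t = pm (j |: s) t + pm s (j |: t).
Proof.
by move=> js jt; rewrite /pm !big_setU1 //=; ring.
Qed.

Lemma meets_inJ_pm C s t : [disjoint s & t] -> ~~ meets C s t -> inJ C (pm s t).
Proof.
move=> dis_st not_meets; move free_st: #|~: (s :|: t)| => m.
elim: m s t free_st dis_st not_meets => [|m IHm] s t free_st dis_st not_meets.
  have cover : s :|: t = setT by apply/setC_inj; rewrite setCT; apply/cards0_eq.
  have def_t : t = ~: s.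
    apply/setP => j; move/setP/(_ j): cover; rewrite !inE.
    by case: (boolP (j \in s)) => [/(disjointFr dis_st)->|_ /= ->].
  rewrite def_t; apply: inJ_rho; apply: contra not_meets => sC.
  by apply/exists_inP; exists s => //; rewrite subxx.
have [j j_free] : exists j, j \in ~: (s :|: t) by apply/set0Pn; rewrite -card_gt0 free_st.
move: (j_free); rewrite !inE negb_or => /andP[js jt].
have free_U1 s' t' : s' :|: t' = j |: (s :|: t) -> #|~: (s' :|: t')| = m.
  move=> ->; have -> : ~: (j |: (s :|: t)) = ~: (s :|: t) :\ j.
    by rewrite setDE setCU setIC.
  by move: free_st; rewrite (cardsD1 j) j_free => -[].
rewrite (pm_splitU1 js jt); apply: inJD; apply: IHm.
- by apply: free_U1; rewrite setUA.
- by rewrite disjoints_subset subUset sub1set inE jt -disjoints_subset dis_st.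
- by apply: contra not_meets; apply: meetsS => //; apply: subsetUr.
- by apply: free_U1; rewrite setUCA.
- rewrite disjoint_sym disjoints_subset subUset sub1set inE js /=.
  by rewrite -disjoints_subset disjoint_sym.
- by apply: contra not_meets; apply: meetsS => //; apply: subsetUr.
Qed.

Lemma pm_pdvd s t s' t' : s' \subset s -> t' \subset t -> pdvd (pm s' t') (pm s t).
Proof.
move=> ss' tt'; exists (pm (s :\: s') (t :\: t')); rewrite /pm.
rewrite (big_setID s') (big_setID (A := t) t') /= (setIidPr ss') (setIidPr tt').
ring.
Qed.

Lemma pdvd_pm_subset s t s' t' : [disjoint s & t] -> pdvd (pm s' t') (pm s t) ->
  s' \subset s /\ t' \subset t.
Proof.
move=> dis_st [r def_pm]; have pm_at u := congr1 (meval (indic u)) def_pm.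
split; apply/negPn/negP => sub'.
  move: (pm_at s); rewrite meval_pm mevalM !meval_pm subxx dis_st (negbTE sub') mulr0.
  by move/eqP; rewrite oner_eq0.
have dis_Ct : [disjoint ~: t & t] by rewrite disjoints_subset.
have := pm_at (~: t); rewrite meval_pm mevalM !meval_pm -disjoints_subset dis_st dis_Ct.
rewrite [[disjoint ~: t & t']]disjoint_sym disjoints_subset setCK (negbTE sub') andbF.
by rewrite mulr0 => /eqP; rewrite oner_eq0.
Qed.

Lemma inCFP C s t : inCF C s t <->
  [/\ [disjoint s & t], ~~ meets C s t &
      forall s' t', s' \subset s -> t' \subset t -> ~~ meets C s' t' -> s' = s /\ t' = t].
Proof.
split=> [[dis_st J_st min_st] | [dis_st not_meets min_st]].
  split=> // [|s' t' ss' tt' not_meets']; first exact: inJ_pm_meets.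
  have dis' : [disjoint s' & t'] by apply: disjointWl ss' (disjointWr tt' dis_st).
  have eq_pm := min_st s' t' dis' (meets_inJ_pm dis' not_meets') (pm_pdvd ss' tt').
  have [s's t't] : s \subset s' /\ t \subset t'.
    by apply: pdvd_pm_subset dis' _; exists 1; rewrite mul1r eq_pm.
  by split; apply/eqP; rewrite eqEsubset ?ss' ?tt' ?s's ?t't.
split=> [//||s' t' _ J' dvd']; first exact: meets_inJ_pm.
have [ss' tt'] := pdvd_pm_subset dis_st dvd'.
by have [-> ->] := min_st s' t' ss' tt' (inJ_pm_meets J').
Qed.
End PseudoMonomials.

Section DegreeTwoCodes.
Variable n : nat.
Implicit Types (s t a b c : {set 'I_n}) (C : code n) (x y : 'I_n).

Lemma meets0l C t : standing C -> meets C set0 t.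
Proof.
by case=> C0 _ _; apply/exists_inP; exists set0; rewrite // disjoints_subset !sub0set.
Qed.

Lemma meets1 C x : standing C -> meets C [set x] set0.
Proof.
case=> _ covered _; have [c cC xc] := covered x.
by apply/exists_inP; exists c; rewrite // sub1set xc disjoints_subset setC0 subsetT.
Qed.

Lemma codeword_meets2 C c x y : c \in C -> x \in c -> y \in c -> meets C [set x; y] set0.
Proof.
move=> cC xc yc; apply/exists_inP; exists c => //.
by rewrite subUset !sub1set xc yc disjoints_subset setC0 subsetT.
Qed.

Lemma codeword_meets11 C c x y : c \in C -> x \in c -> y \notin c -> meets C [set x] [set y].
Proof.
by move=> cC xc yc; apply/exists_inP; exists c; rewrite // sub1set xc disjoint_sym disjoints1.
Qed.

Lemma eq_subsets_card s t s' t' : s' \subset s -> t' \subset t ->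
  #|s| + #|t| <= #|s'| + #|t'| -> s' = s /\ t' = t.
Proof.
move=> ss' tt' card_le; split; apply/eqP; rewrite eqEcard ?ss' ?tt' /=.
  rewrite -(leq_add2r #|t|) (leq_trans card_le) // leq_add2l.
  exact: subset_leq_card.
rewrite -(leq_add2l #|s|) (leq_trans card_le) // leq_add2r.
exact: subset_leq_card.
Qed.

Lemma two_le_card_nonmeeting C s t : standing C -> ~~ meets C s t -> 2 <= #|s| + #|t|.
Proof.
move=> St not_meets.
have : #|s| != 0 by apply: contra not_meets => /eqP/cards0_eq->; apply: meets0l.
have : ~~ ((#|s| == 1) && (#|t| == 0)).
  by apply: contra not_meets => /andP[/cards1P[x ->] /eqP/cards0_eq->]; apply: meets1.
lia.
Qed.

Lemma inCF_card2 C s t : standing C -> [disjoint s & t] -> #|s| + #|t| = 2 ->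
  ~~ meets C s t -> inCF C s t.
Proof.
move=> St dis_st card_st not_meets; apply/inCFP; split=> // s' t' ss' tt' not_meets'.
by apply: eq_subsets_card; rewrite // card_st (two_le_card_nonmeeting St not_meets').
Qed.

Lemma inCF_deg2 C s t : standing C -> degree_two C -> inCF C s t ->
  (exists x y, s = [set x; y] /\ t = set0) \/ (exists x y, s = [set x] /\ t = [set y]).
Proof.
move=> St D2 CF_st; have /inCFP[_ not_meets _] := CF_st.
move: (D2 _ _ CF_st) (two_le_card_nonmeeting St not_meets).
have [/eqP/cards1P[x ->] | s_ne1] := eqVneq #|s| 1.
  rewrite cards1 => card_t _; right.
  have /cards1P[y ->] : #|t| == 1 by apply/eqP; lia.
  by exists x, y.
have [/cards0_eq s0 | s_ne0] := eqVneq #|s| 0; first by rewrite s0 meets0l in not_meets.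
move=> card_st _; left; have /cards2P[x [y [_ ->]]] : #|s| == 2 by apply/eqP; lia.
by exists x, y; split=> //; apply/cards0_eq; lia.
Qed.

Lemma notin_code_inCF C c : c \notin C ->
  exists a b, [/\ inCF C a b, a \subset c & [disjoint c & b]].
Proof.
move=> cNC; pose gap : pred ({set 'I_n} * {set 'I_n}) := fun p =>
  [&& p.1 \subset c, p.2 \subset ~: c & ~~ meets C p.1 p.2].
have gap_c : gap (c, ~: c).
  rewrite /gap !subxx; apply/exists_inP => -[d dC /andP[cd]].
  rewrite disjoints_subset setCK => dc.
  by move: dC; rewrite (_ : d = c) ?(negbTE cNC) //; apply/eqP; rewrite eqEsubset dc.
case: (arg_minnP (fun p : {set 'I_n} * {set 'I_n} => #|p.1| + #|p.2|) gap_c) => -[a b].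
move=> /and3P[/= ac bc not_meets] min_ab.
exists a, b; split=> //; last by rewrite disjoint_sym disjoints_subset.
apply/inCFP; split=> [||s' t' as' bt' not_meets']; last 1 first.
- apply: eq_subsets_card => //; apply: (min_ab (s', t')).
  by rewrite /gap /= (subset_trans as' ac) (subset_trans bt' bc).
- by rewrite disjoints_subset (subset_trans ac) // -setCS setCK.
- exact: not_meets.
Qed.

Lemma mem_codeP C c : standing C -> degree_two C -> c \in C <->
  (forall x y, x \in c -> y \in c -> meets C [set x; y] set0) /\
  (forall x y, x \in c -> y \notin c -> meets C [set x] [set y]).
Proof.
move=> St D2; split=> [cC | [pairs_in singles]].
  by split=> x y; [apply: codeword_meets2 | apply: codeword_meets11].
apply/negPn/negP => /notin_code_inCF[a [b [CF_ab ac cb]]].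
have /inCFP[_ not_meets _] := CF_ab; move/negP: not_meets; apply.
case: (inCF_deg2 St D2 CF_ab) ac cb => -[x [y [-> ->]]].
  by rewrite subUset !sub1set => /andP[xc yc] _; apply: pairs_in.
by rewrite sub1set disjoint_sym disjoints1; apply: singles.
Qed.
End DegreeTwoCodes.

Section GraphAndOrder.
Variable n : nat.
Implicit Types (s t a b c : {set 'I_n}) (C : code n) (x y : 'I_n).

Lemma PltP C x y : standing C -> Plt C x y <-> x != y /\ ~~ meets C [set x] [set y].
Proof.
move=> St; split=> [/inCFP[dis_xy not_meets _] | [neq_xy not_meets]].
  by split; rewrite // -in_set1 -disjoints1.
by apply: inCF_card2; rewrite ?disjoints1 ?inE ?cards1.
Qed.

Lemma subset_of_pair (T : finType) (A B : {set T}) (x y : T) : A \subset [set x; y] ->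
  (x \in A -> x \in B) -> (y \in A -> y \in B) -> A \subset B.
Proof.
move=> A_xy xB yB; apply/subsetP => z zA.
by have /set2P[] := subsetP A_xy z zA => zE; rewrite zE in zA *; [apply: xB | apply: yB].
Qed.

Lemma meets_split_pair C x y a b : standing C -> meets C [set x; y] set0 ->
  meets C [set x] [set y] -> meets C [set y] [set x] ->
  a :|: b = [set x; y] -> [disjoint a & b] -> meets C a b.
Proof.
move=> St Mxy Mx My def_ab dis_ab.
have a_xy : a \subset [set x; y] by rewrite -def_ab subsetUl.
have b_xy : b \subset [set x; y] by rewrite -def_ab subsetUr.
have in_b z : z \in [set x; y] -> (z \in b) = (z \notin a).
  rewrite -def_ab inE; case: (boolP (z \in a)) => [/(disjointFr dis_ab)-> | _] //=.
have [xb yb] := (in_b x (set21 x y), in_b y (set22 x y)).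
case xa: (x \in a); case ya: (y \in a);
  [apply: meetsS Mxy | apply: meetsS Mx | apply: meetsS My | apply: meetsS (meets0l b St)];
  by apply: (subset_of_pair (x := x) (y := y)); rewrite ?xb ?yb ?xa ?ya ?inE ?eqxx ?orbT.
Qed.

Lemma GedgeP C x y : standing C -> Gedge C x y <->
  [/\ x != y, meets C [set x; y] set0, meets C [set x] [set y] & meets C [set y] [set x]].
Proof.
move=> St; split=> [[/eqP neq_xy no_CF] | [neq_xy Mxy Mx My]].
  have meets2 a b : [disjoint a & b] -> #|a| + #|b| = 2 -> a :|: b = [set x; y] ->
      meets C a b.
    move=> dis_ab card_ab def_ab; have [//|not_meets] := boolP (meets C a b).
    by case: no_CF; exists a, b; split=> //; apply: inCF_card2.
  split=> //; apply: meets2.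
  - by rewrite disjoints_subset setC0 subsetT.
  - by rewrite cards2 neq_xy cards0.
  - by rewrite setU0.
  - by rewrite disjoints1 inE.
  - by rewrite !cards1.
  - by [].
  - by rewrite disjoints1 inE eq_sym.
  - by rewrite !cards1.
  - by rewrite setUC.
split=> [|[a [b [CF_ab def_ab]]]]; first exact/eqP.
have /inCFP[dis_ab not_meets _] := CF_ab.
by rewrite (meets_split_pair St Mxy Mx My def_ab dis_ab) in not_meets.
Qed.

Lemma P_minimal_meets C i j : standing C -> P_minimal C i -> j != i ->
  meets C [set j] [set i].
Proof.
move=> St min_i neq_ji; have [//|not_meets] := boolP (meets C [set j] [set i]).
by case: (min_i j); apply/(PltP _ _ St).
Qed.

Lemma P_minimalP C i : standing C -> degree_two C ->
  P_minimal C i <-> {in C, forall c, c :\ i \in C}.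
Proof.
move=> St D2; split=> [min_i c cC | del_closed j /(PltP _ _ St)[neq_ji]].
  apply/(mem_codeP _ St D2); split=> x y; rewrite !in_setD1.
    by move=> /andP[_ xc] /andP[_ yc]; apply: codeword_meets2 cC xc yc.
  move=> /andP[neq_xi xc]; have [-> _ | neq_yi /= yc] := eqVneq y i.
    exact: P_minimal_meets.
  exact: codeword_meets11 cC xc yc.
case: St => _ covered _; have [c cC jc] := covered j; apply/negP; rewrite negbK.
by apply: (codeword_meets11 (del_closed c cC)); rewrite !inE ?eqxx ?neq_ji.
Qed.

Lemma k_piercingE C k i : k_piercing C k i <-> exists s t,
  [/\ s \subset t, i \notin t, #|t :\: s| = k, {in C, forall c, c :\ i \in C} &
      forall c, i \in c -> (c \in C) = (s \subset c) && (c \subset i |: t)].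
Proof.
have notin_del c : c \in code_del C i -> i \notin c by case/imsetP=> d _ ->; rewrite !inE eqxx.
have in_box s t c : i \in c ->
    (c \in Defs.interval (i |: s) (i |: t)) = (s \subset c) && (c \subset i |: t).
  by move=> ic; rewrite inE subUset sub1set ic.
split=> [[s [t [st ti card_ts box_del defC]]] | [s [t [st it card_ts del_closed mem_i]]]].
  exists s, t; split=> //.
  - by move: ti; rewrite subsetC sub1set inE.
  - by move=> c cC; rewrite defC inE; apply/orP; left; apply: imset_f.
  - move=> c ic; rewrite -in_box // {1}defC inE.
    by case: (boolP (c \in code_del C i)) => // /notin_del; rewrite ic.
have box_C (g : {set 'I_n}) : g \subset t -> s \subset g -> i |: g \in C.
  by move=> gt sg; rewrite mem_i ?setU11 // (subset_trans sg (subsetUr _ _)) setUS.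
have del_id c : i \notin c -> c :\ i = c.
  by move=> ic; apply/setDidPl; rewrite disjoint_sym disjoints1.
exists s, t; split=> //.
- by rewrite subsetC sub1set inE.
- apply/subsetP => g; rewrite inE => /andP[sg gt]; apply/imsetP; exists (i |: g).
    exact: box_C.
  by rewrite setU1K //; apply: contra it; apply: (subsetP gt).
- apply/setP => c; rewrite inE; have [ic | ic] := boolP (i \in c).
    rewrite in_box // -mem_i //.
    by case: (boolP (c \in code_del C i)) => // /notin_del; rewrite ic.
  rewrite (_ : c \in Defs.interval _ _ = false) ?orbF; last first.
    by apply: contraNF ic; rewrite inE subUset sub1set => /andP[/andP[-> _] _].
  apply/idP/imsetP => [cC | [d dC ->]]; last exact: del_closed.
  by exists c; rewrite ?del_id.
Qed.

End GraphAndOrder.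

Section PiercingIsElimination.
Variables (n : nat) (C : code n) (i : 'I_n) (s t : {set 'I_n}).
Implicit Types (a b c w : {set 'I_n}) (x y j : 'I_n).
Hypotheses (St : standing C) (st : s \subset t) (it : i \notin t).
Hypothesis del_closed : {in C, forall c, c :\ i \in C}.
Hypothesis mem_i : forall c, i \in c -> (c \in C) = (s \subset c) && (c \subset i |: t).

Lemma i_notin_s : i \notin s.
Proof. by apply: contra it; apply: (subsetP st). Qed.

Lemma piercing_interval_sub w : s \subset w -> w \subset i |: t -> w \in C.
Proof.
move=> sw wt; have iw_C : i |: w \in C.
  by rewrite mem_i ?setU11 // (subset_trans sw (subsetUr _ _)) subUset sub1set setU11.
have [iw | iNw] := boolP (i \in w); last by rewrite -(setU1K iNw); apply: del_closed.
by move: iw_C; have /setUidPr-> : [set i] \subset w by rewrite sub1set.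
Qed.

Lemma piercing_meets a b : [disjoint a & b] -> a :|: b \subset i |: (t :\: s) ->
  meets C a b.
Proof.
move=> dis_ab /subUsetP[a_sub b_sub]; apply/exists_inP; exists (s :|: a).
  apply: piercing_interval_sub; first exact: subsetUl.
  rewrite subUset (subset_trans st (subsetUr _ _)) (subset_trans a_sub) //.
  by rewrite setUS // subsetDl.
have a_Cb : a \subset ~: b by rewrite -disjoints_subset.
rewrite subsetUr disjoints_subset subUset a_Cb andbT subsetC.
apply: subset_trans b_sub _; rewrite subUset sub1set inE i_notin_s /=.
by apply/subsetP => z; rewrite !inE => /andP[].
Qed.

Lemma piercing_Gedge x y : x != y -> [set x; y] \subset i |: (t :\: s) -> Gedge C x y.
Proof.
move=> neq_xy xy_sub; apply/(GedgeP _ _ St); split=> //; apply: piercing_meets.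
- by rewrite disjoints_subset setC0 subsetT.
- by rewrite setU0.
- by rewrite disjoints1 inE.
- by [].
- by rewrite disjoints1 inE eq_sym.
- by rewrite setUC.
Qed.

Lemma Gedge_piercing j : Gedge C i j <-> j \in t :\: s.
Proof.
split=> [/(GedgeP _ _ St)[neq_ij M2 M11 _] | jts].
  rewrite inE; apply/andP; split.
    case/exists_inP: M11 => c cC /andP[]; rewrite sub1set disjoint_sym disjoints1 => ic jNc.
    by move: cC; rewrite mem_i // => /andP[/subsetP s_c _]; apply: contra jNc; apply: s_c.
  case/exists_inP: M2 => c cC /andP[]; rewrite subUset !sub1set => /andP[ic jc] _.
  move: cC; rewrite mem_i // => /andP[_ /subsetP/(_ j jc)].
  by rewrite in_setU1 eq_sym (negbTE neq_ij).
apply: piercing_Gedge; first by apply: contraNneq it => ->; move: jts; rewrite inE => /andP[].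
by rewrite subUset !sub1set setU11 /= inE jts orbT.
Qed.

Lemma simplicial_piercing : simplicial C i.
Proof.
move=> j l /Gedge_piercing jts /Gedge_piercing lts /eqP neq_jl.
by apply: piercing_Gedge; rewrite // subUset !sub1set !in_setU1 jts lts !orbT.
Qed.

End PiercingIsElimination.

Section EliminationIsPiercing.
Variables (n : nat) (C : code n) (i : 'I_n) (N : {set 'I_n}).
Implicit Types (c g : {set 'I_n}) (x y j : 'I_n).
Hypotheses (St : standing C) (D2 : degree_two C).
Hypotheses (simp_i : simplicial C i) (min_i : P_minimal C i).
Hypothesis nbhd : forall j, j \in N <-> Gedge C i j.

(* [up] is the set of neurons above [i] in P(C); C is the piercing along [up, up :|: N]. *)
Let up := [set j | (j != i) && ~~ meets C [set i] [set j]].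
Let t := up :|: N.

Lemma meets_i_notin_up j : j != i -> j \notin up -> meets C [set i] [set j].
Proof. by move=> neq_ji; rewrite inE neq_ji negbK. Qed.

Lemma neighbor_neq j : j \in N -> j != i.
Proof. by case/nbhd/(GedgeP _ _ St) => neq_ij _ _ _; rewrite eq_sym. Qed.

Lemma i_notin_t : i \notin t.
Proof. by rewrite !inE eqxx /=; apply/negP => /neighbor_neq; rewrite eqxx. Qed.

Lemma disjoint_up_N : [disjoint up & N].
Proof.
rewrite -setI_eq0; apply/set0Pn => -[j]; rewrite !inE => /andP[/andP[_ not_meets] /nbhd].
by case/(GedgeP _ _ St) => _ _ M11 _; rewrite M11 in not_meets.
Qed.

Lemma codeword_through_i c : c \in C -> i \in c -> up \subset c /\ c \subset i |: t.
Proof.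
move=> cC ic; split.
  apply/subsetP => j; rewrite inE => /andP[_]; apply: contraNT => jNc.
  exact: codeword_meets11 cC ic jNc.
apply/subsetP => z zc; rewrite in_setU1 in_setU.
have [//|neq_zi /=] := eqVneq z i; have [//|z_up /=] := boolP (z \in up).
apply/nbhd/(GedgeP _ _ St); split.
- by rewrite eq_sym.
- exact: codeword_meets2 cC ic zc.
- exact: meets_i_notin_up.
- exact: P_minimal_meets.
Qed.

Lemma codeword_with_i y : y \in i |: t -> exists2 c, c \in C & (i \in c) && (y \in c).
Proof.
have [c0 c0C ic0] : exists2 c, c \in C & i \in c by case: St => _ covered _; apply: covered.
rewrite in_setU1 in_setU => /or3P[/eqP-> | y_up | /nbhd].
- by exists c0; rewrite ?ic0.
- by exists c0; rewrite // ic0 (subsetP (codeword_through_i c0C ic0).1).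
case/(GedgeP _ _ St) => _ /exists_inP[c cC /andP[iy_c _]] _ _.
by exists c; rewrite // -!sub1set -subUset.
Qed.

Lemma box_meets2 x y : x \in i |: t -> y \in i |: t -> meets C [set x; y] set0.
Proof.
have through_i u v : u \in i |: t -> (v == i) || (v \in up) -> meets C [set u; v] set0.
  move=> ut vi; have [c cC /andP[ic uc]] := codeword_with_i ut.
  apply: (codeword_meets2 cC uc).
  by case/orP: vi => [/eqP-> // | /(subsetP (codeword_through_i cC ic).1)].
move=> xt yt; have [y_iu | /negPf y_N] := boolP ((y == i) || (y \in up)).
  exact: through_i.
have [x_iu | /negPf x_N] := boolP ((x == i) || (x \in up)).
  by rewrite setUC; apply: through_i.
move: xt yt; rewrite !in_setU1 !in_setU !orbA x_N y_N /= => /nbhd Gx /nbhd Gy.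
have [-> | neq_xy] := eqVneq x y; first by rewrite setUid; apply: meets1.
by case/(GedgeP _ _ St): (simp_i Gx Gy (elimN eqP neq_xy)).
Qed.

Lemma box_meets11 x y : x \in i |: t -> y \notin up -> y != i -> x != y ->
  meets C [set x] [set y].
Proof.
move=> xt yNup neq_yi neq_xy; have Miy := meets_i_notin_up neq_yi yNup.
move: (xt); rewrite in_setU1 in_setU => /or3P[/eqP-> // | x_up | /nbhd Gx].
  case/exists_inP: Miy => c cC /andP[]; rewrite sub1set disjoint_sym disjoints1 => ic yNc.
  exact: codeword_meets11 cC (subsetP (codeword_through_i cC ic).1 x x_up) yNc.
have [/nbhd Gy | yNN] := boolP (y \in N).
  by case/(GedgeP _ _ St): (simp_i Gx Gy (elimN eqP neq_xy)).
have [c cC /andP[ic xc]] := codeword_with_i xt; apply: (codeword_meets11 cC xc).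
apply: contra yNN => /(subsetP (codeword_through_i cC ic).2).
by rewrite in_setU1 in_setU (negbTE neq_yi) (negbTE yNup).
Qed.

Lemma box_codeword g : up \subset g -> g \subset t -> i |: g \in C.
Proof.
move=> up_g g_t; have ig_t : i |: g \subset i |: t by apply: setUS.
apply/(mem_codeP _ St D2); split=> x y xg yg.
  by apply: box_meets2; apply: (subsetP ig_t).
apply: box_meets11; first exact: (subsetP ig_t).
- by apply: contra yg => /(subsetP up_g) yg; rewrite in_setU1 yg orbT.
- by apply: contraNneq yg => ->; rewrite setU11.
- by apply: contraNneq yg => <-.
Qed.

Lemma elimination_piercing : k_piercing C #|N| i.
Proof.
have i_notin_up : i \notin up by rewrite inE eqxx.
apply/k_piercingE; exists up, t; split.
- exact: subsetUl.
- exact: i_notin_t.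
- have dis_N_up : [disjoint N & up] by rewrite disjoint_sym disjoint_up_N.
  by rewrite setDUl setDv set0U (setDidPl dis_N_up).
- exact/P_minimalP.
move=> c ic; apply/idP/andP => [cC | [up_c c_t]]; first exact: codeword_through_i.
rewrite -(setD1K ic); apply: box_codeword; first by rewrite subsetD1 up_c.
apply/subsetP => z; rewrite in_setD1 => /andP[neq_zi zc].
by move: (subsetP c_t z zc); rewrite in_setU1 (negbTE neq_zi).
Qed.

End EliminationIsPiercing.

Theorem proposition1p7 (n : nat) (C : code n) (k : nat) (i : 'I_n) :
  standing C -> degree_two C ->
  (k_piercing C k i <-> elimination_neuron C i /\ num_neighbors C i k).
Proof.
move=> St D2; split=> [/k_piercingE[s [t [st it card_ts del_closed mem_i]]] |].
  split; first split.
  - exact: simplicial_piercing St st it del_closed mem_i.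
  - exact/(P_minimalP _ St D2).
  exists (t :\: s); split=> // j; apply: iff_sym; exact: Gedge_piercing.
case=> -[simp_i min_i] [N [nbhd <-]].
exact: elimination_piercing.
Qed.
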